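(* Fix an integer $d\ge2$. For any $k\in\mathbb{N}$ and $q\in(0,1)$ there exists $q'<q$ such that the following holds. For every $b'\subseteq\{1,\dots,k+1\}$, with $b=b'\cap\{1,\dots,k\}$, there exists a coupling $(A,B)$ of random subsets $A,B\subseteq[d]_\star$ such that $A\preceq B$ almost surely, $A$ has law $\mathscr{A}_{q,k}(b)$, and $B$ has law $\mathscr{A}_{q',k+1}(b')$.
   Context: $[d]=\{1,\dots,d\}$, $[d]_\star=\bigcup_{n\ge0}[d]^n$ (finite sequences, $[d]^0=\{o\}$ with $o$ the empty sequence), with concatenation $u\cdot v$. For $u\in[d]_\star$, $\mathrm{prog}(u)=\{u\cdot v:v\in[d]_\star\}$ and $\tau_u:\mathrm{prog}(u)\to[d]_\star$ is the shift $\tau_u(u\cdot v)=v$. For $\hat q\in(0,1)$, $m\in\mathbb{N}$ and $c\subseteq\{1,\dots,m\}$, $\mathscr{A}_{\hat q,m}(c)$ denotes the law of the random subset of $\bigcup_{i\in c}[d]^{m-i}$ in which each point is included independently with probability $\hat q$. For $A,B\subseteq[d]_\star$, write $A\preceq B$ if there exist $u,v\in[d]_\star$ with $A\subseteq\mathrm{prog}(u)$ and $\tau_u(A)\subseteq\tau_v(B\cap\mathrm{prog}(v))$. *)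

From HB Require Import structures.
From mathcomp Require Import all_boot all_order all_algebra.
From mathcomp Require Import finmap.
Set Implicit Arguments. Unset Strict Implicit. Unset Printing Implicit Defensive.
Import Order.TTheory GRing.Theory Num.Theory.
Local Open Scope ring_scope.
Local Open Scope fset_scope.

(* [d]_star : finite words over the alphabet [d], represented by 'I_d
   (letter j : 'I_d stands for j+1 in {1,...,d}); concatenation is ++,
   the empty word o is [::]. *)
Definition word (d : nat) := seq 'I_d.

Definition in_prog d (u : word d) (w : word d) : Prop := exists v : word d, w = u ++ v.

(* tau_u(X) for X a subset of prog(u) (general X: image of X ∩ prog u under tau_u):
   { v : u.v in X } *)
Definition shift d (u : word d) (X : word d -> Prop) : word d -> Prop :=
  fun v => X (u ++ v).

Definition preceq d (A B : word d -> Prop) : Prop :=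
  exists u v : word d,
    (forall w, A w -> in_prog u w) /\
    (forall x, shift u A x -> shift v (fun w => B w /\ in_prog v w) x).

(* The finite set  U_{m}(c) = \bigcup_{i in c, 1 <= i <= m} [d]^{m-i}, listed
   by word length n = m - i, 0 <= n < m (each word listed once). *)
Definition layer d (n : nat) : seq (word d) :=
  [seq val t | t <- enum {: n.-tuple 'I_d}].

Definition supp_set d (m : nat) (c : {fset nat}) : seq (word d) :=
  flatten [seq layer d n | n <- iota 0 m & (m - n)%N \in c].

Definition lawA d (R : realDomainType) (qh : R) (m : nat) (c : {fset nat})
    (S : {fset word d}) : R :=
  if all (fun w => w \in supp_set d m c) (enum_fset S)
  then qh ^+ #|` S| * (1 - qh) ^+ (size (supp_set d m c) - #|` S|)
  else 0.

(* A (finitely supported, hence discrete) coupling of random finite subsets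
   A, B of [d]_star, given by its joint mass function mu, whose marginals are
   lA and lB and such that Rel A B holds almost surely. *)
Definition coupling d (R : realDomainType)
    (lA lB : {fset word d} -> R) (Rel : {fset word d} -> {fset word d} -> Prop) :=
  exists (mu : {fset word d} * {fset word d} -> R)
         (s : seq ({fset word d} * {fset word d})),
    uniq s /\
    (forall p, 0 <= mu p) /\
    (forall p, p \notin s -> mu p = 0) /\
    \sum_(p <- s) mu p = 1 /\
    (forall S, \sum_(p <- s | p.1 == S) mu p = lA S) /\
    (forall S, \sum_(p <- s | p.2 == S) mu p = lB S) /\
    (forall p, p \in s -> 0 < mu p -> Rel p.1 p.2).

(* Let S be the support of A, N := |S|, and S' that of B. Prefixing a letter maps S
   injectively into S', and for two distinct letters j0, j1 the copies j0.S and j1.S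
   are disjoint, so under the law of B the event E = "B contains all of j0.S" (of
   probability q'^N) is independent of τ_{j1}(B) ∩ S, which has law P_{q'} (the
   Bernoulli subset of S with parameter q'). Off E put A := τ_{j1}(B) ∩ S; on E draw A
   from (P_q - (1 - q'^N) P_{q'}) / q'^N. Then A has law
   (1 - q'^N) P_{q'} + (P_q - (1 - q'^N) P_{q'}) = P_q, and A ⪯ B through the prefix
   j0 or j1. The residual law is nonnegative once
   (1 - q'^N) q'^a (1 - q')^(N - a) <= q^a (1 - q)^(N - a) for all a <= N, which holds
   for q' close to q since N <= sum_(n < k) d^n whatever b' is. *)

From HB Require Import structures.
From mathcomp Require Import all_boot all_order all_algebra.
From mathcomp Require Import finmap.
From mathcomp Require Import reals.
From mathcomp Require Import ring lra.
Import Order.TTheory GRing.Theory Num.Theory.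
Set Implicit Arguments. Unset Strict Implicit. Unset Printing Implicit Defensive.
Local Open Scope ring_scope.

Lemma prodr_const_count (R : pzSemiRingType) (I : Type) (r : seq I) (P : pred I) (c : R) :
  \prod_(i <- r | P i) c = c ^+ count P r.
Proof. by rewrite big_const_seq; elim: (count P r) => //= n ->; rewrite exprS. Qed.

Lemma natr_all (R : pzSemiRingType) (I : Type) (r : seq I) (P : pred I) :
  (all P r)%:R = \prod_(i <- r) (P i)%:R :> R.
Proof.
elim: r => [|i r IH]; first by rewrite big_nil.
by rewrite big_cons /= -IH; case: (P i); rewrite ?mul1r ?mul0r.
Qed.

Lemma sum_pred1_seq (T : eqType) (R : pzSemiRingType) (r : seq T) x (F : T -> R) :
  uniq r -> \sum_(y <- r | y == x) F y = if x \in r then F x else 0.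
Proof.
move=> ur; case: ifP => xr; first by rewrite -big_filter filter_pred1_uniq // big_seq1.
by rewrite big1_seq // => y /andP[/eqP -> ]; rewrite xr.
Qed.

Lemma prodr_if_mem (T : eqType) (R : comPzSemiRingType) (L P : seq T) (h : T -> R) :
  uniq L -> uniq P -> {subset P <= L} ->
  \prod_(x <- L) (if x \in P then h x else 1) = \prod_(x <- P) h x.
Proof.
move=> uL uP PL; rewrite -big_mkcond -big_filter; apply/perm_big/uniq_perm.
- exact: filter_uniq.
- exact: uP.
by move=> x; rewrite mem_filter andb_idr //; apply: PL.
Qed.

Section FiniteSubsets.
Variable K : choiceType.
Local Open Scope fset_scope.
Implicit Types (L : seq K) (X : {fset K}).

Fixpoint fsubsets L : seq {fset K} :=
  if L is x :: L' then fsubsets L' ++ [seq x |` X | X <- fsubsets L'] else [:: fset0].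

Lemma mem_fsubsets L X : (X \in fsubsets L) = all (fun x => x \in L) (enum_fset X).
Proof.
elim: L X => [|x L IH] X /=.
  rewrite inE; apply/eqP/allP => [-> y //|XL].
  by apply/fsetP => y; rewrite in_fset0; apply/negP => /XL.
rewrite mem_cat IH; apply/idP/allP => [|XxL].
  case/orP => [/allP XL y /XL|/mapP[Y]]; first by rewrite inE orbC => ->.
  rewrite IH => /allP YL -> y; rewrite in_fset1U inE.
  by case/orP => [-> //|/YL ->]; rewrite orbT.
case xX: (x \in X).
  apply/orP; right; apply/mapP; exists (X `\ x); last by rewrite fsetD1K.
  rewrite IH; apply/allP => y; rewrite in_fsetD1 => /andP[yx /XxL].
  by rewrite inE (negbTE yx).
apply/orP; left; apply/allP => y yX; have := XxL y yX; rewrite inE.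
by case: eqP => [eyx|//]; rewrite -eyx [_ \in X]yX in xX.
Qed.

Lemma fsubsets_notin L X x : X \in fsubsets L -> x \notin L -> x \notin X.
Proof. by rewrite mem_fsubsets => /allP XL; apply: contra => /XL. Qed.

Lemma fsubsets_uniq L : uniq L -> uniq (fsubsets L).
Proof.
elim: L => [|x L IH] //= /andP[xL uL].
rewrite cat_uniq IH //= map_inj_in_uniq ?IH // => [|X Y XL YL eXY]; last first.
  by rewrite -(fsetU1K (fsubsets_notin XL xL)) eXY fsetU1K // (fsubsets_notin YL xL).
rewrite andbT; apply/hasPn => _ /mapP[X _ ->].
rewrite mem_fsubsets; apply/negP => /allP/(_ x); rewrite fsetU11 => /(_ isT).
exact/negP.
Qed.

Lemma big_fsubsets_prod (R : comPzSemiRingType) L (f g : K -> R) : uniq L ->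
  \sum_(X <- fsubsets L) \prod_(x <- L) (if x \in X then f x else g x) =
  \prod_(x <- L) (f x + g x).
Proof.
elim: L => [|y L IH] /=; first by rewrite big_seq1 !big_nil.
case/andP=> yL uL; rewrite big_cat big_map big_cons mulrDl [RHS]addrC -IH //.
rewrite !big_distrr /=; congr (_ + _)%R; apply: eq_big_seq => X XL.
  by rewrite big_cons (negbTE (fsubsets_notin XL yL)).
rewrite big_cons fsetU11; congr (_ * _)%R; apply: eq_big_seq => x xL.
by rewrite in_fset1U; case: eqP => // exy; rewrite -exy xL in yL.
Qed.

End FiniteSubsets.

Section BernoulliSubset.
Variables (R : comPzRingType) (K : choiceType).
Local Open Scope fset_scope.
Implicit Types (p : R) (L : seq K) (X : {fset K}).

Definition bernoulli_subset p L X : R :=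
  if all (fun x => x \in L) (enum_fset X)
  then p ^+ #|` X| * (1 - p) ^+ (size L - #|` X|) else 0.

Lemma count_fsubsets L X : uniq L -> X \in fsubsets L ->
  count (fun x => x \in X) L = #|` X|.
Proof.
rewrite mem_fsubsets => uL /allP XL; rewrite -size_filter; apply: perm_size.
apply: uniq_perm; rewrite ?filter_uniq ?fset_uniq // => x.
by rewrite mem_filter; apply/andP/idP => [[] //|xX]; split; last exact: XL.
Qed.

Lemma bernoulli_subsetE p L X : uniq L ->
  bernoulli_subset p L X =
  if X \in fsubsets L then \prod_(x <- L) (if x \in X then p else 1 - p) else 0.
Proof.
rewrite /bernoulli_subset -mem_fsubsets => uL; case: ifP => // XL.
rewrite (bigID (fun x => x \in X)) /=.
under eq_bigr => x -> do [].
under [Z in _ = _ * Z]eq_bigr => x /negbTE -> do [].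
rewrite !prodr_const_count count_fsubsets //.
by rewrite -(count_predC (fun x => x \in X) L) count_fsubsets // addKn.
Qed.

Lemma bernoulli_subset_eq0 p L X : X \notin fsubsets L -> bernoulli_subset p L X = 0.
Proof. by rewrite /bernoulli_subset -mem_fsubsets => /negbTE ->. Qed.

Lemma sum_bernoulli_subset p L : uniq L ->
  \sum_(X <- fsubsets L) bernoulli_subset p L X = 1.
Proof.
move=> uL; under eq_big_seq => X XL do rewrite bernoulli_subsetE // XL.
by rewrite big_fsubsets_prod // big1 // => x _; rewrite addrC subrK.
Qed.

Lemma sum_bernoulli_subset_all p L (al be : pred K) : uniq L ->
  \sum_(X <- fsubsets L)
     bernoulli_subset p L X * (all (fun x => if x \in X then al x else be x) L)%:R =
  \prod_(x <- L) (p * (al x)%:R + (1 - p) * (be x)%:R).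
Proof.
move=> uL; rewrite -big_fsubsets_prod //; apply: eq_big_seq => X XL.
rewrite bernoulli_subsetE // XL natr_all -big_split /=; apply: eq_bigr => x _.
by case: (x \in X).
Qed.

End BernoulliSubset.

Lemma bernoulli_subset_ge0 (R : numDomainType) (K : choiceType) (p : R) L (X : {fset K}) :
  0 <= p <= 1 -> 0 <= bernoulli_subset p L X.
Proof.
case/andP=> p0 p1; rewrite /bernoulli_subset; case: ifP => // _.
by rewrite mulr_ge0 // exprn_ge0 // subr_ge0.
Qed.

Section ParameterChoice.
Variable R : realFieldType.

Lemma exprn_lipschitz (x y : R) n :
  0 <= x -> x <= y -> y <= 1 -> y ^+ n <= x ^+ n + n%:R * (y - x).
Proof.
move=> x0 xy y1; elim: n => [|n IH]; first by rewrite !expr0 mul0r addr0.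
have Xn0 : 0 <= x ^+ n by rewrite exprn_ge0.
have Xn1 : x ^+ n <= 1 by rewrite exprn_ile1 // (le_trans xy).
have n0 : 0 <= n%:R :> R by rewrite ler0n.
have yIH : y * y ^+ n <= y * (x ^+ n + n%:R * (y - x)).
  by rewrite ler_wpM2l // (le_trans x0).
rewrite !exprS -[n.+1]addn1 natrD.
have h1 : 0 <= (y - x) * (1 - x ^+ n) by apply: mulr_ge0; lra.
have h2 : 0 <= (1 - y) * (n%:R * (y - x)) by rewrite !mulr_ge0 //; lra.
nra.
Qed.

Lemma ler_mulXn_down (A x y : R) m n : 0 <= x -> x <= y -> 0 < y -> (n <= m)%N ->
  A * y ^+ m <= x ^+ m -> A * y ^+ n <= x ^+ n.
Proof.
move=> x0 xy y0 /subnKC <-; rewrite !exprD => Am.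
rewrite -(ler_pM2r (exprn_gt0 (m - n) y0)) -mulrA (le_trans Am) //.
by rewrite ler_wpM2l ?exprn_ge0 // lerXn2r // ?nnegrE // (le_trans x0).
Qed.

Lemma exists_smaller_parameter (q : R) M : 0 < q < 1 ->
  exists2 q', 0 < q' < q & (1 - q' ^+ M) * (1 - q') ^+ M <= (1 - q) ^+ M.
Proof.
case/andP=> q0 q1.
have b0 : 0 <= q / 2 * (1 - q) by rewrite mulr_ge0 //; lra.
set c := (q / 2 * (1 - q)) ^+ M.
have c0 : 0 < c by rewrite exprn_gt0 // mulr_gt0 //; lra.
have c1 : c <= 1 by rewrite exprn_ile1 //; nra.
have M0 : 0 <= M%:R :> R by rewrite ler0n.
(* With [q' := q - delta], the excess [M delta] of [(1 - q')^M] over [(1 - q)^M]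
   is compensated by [(q' (1 - q'))^M >= c]. *)
set delta := q / 2 * c / (M%:R + 1).
have dM : delta * (M%:R + 1) = q / 2 * c by rewrite divfK // gt_eqF //; lra.
have d0 : 0 < delta by rewrite divr_gt0 ?mulr_gt0 //; lra.
have dq : delta <= q / 2 by nra.
have Md : M%:R * delta <= c by nra.
exists (q - delta); first by apply/andP; split; lra.
set q' := q - delta.
have lip : (1 - q') ^+ M <= (1 - q) ^+ M + M%:R * delta.
  have -> : delta = (1 - q') - (1 - q) by rewrite /q'; ring.
  by apply: exprn_lipschitz; rewrite /q'; lra.
have low : c <= (q' * (1 - q')) ^+ M by rewrite lerXn2r ?nnegrE //; rewrite /q'; nra.
by rewrite mulrBl mul1r -exprMn; lra.
Qed.

Lemma bernoulli_subset_dominated (K : choiceType) (q q' : R) M (L : seq K) X :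
  0 <= q' -> q' <= q -> q < 1 -> (size L <= M)%N ->
  (1 - q' ^+ M) * (1 - q') ^+ M <= (1 - q) ^+ M ->
  (1 - q' ^+ size L) * bernoulli_subset q' L X <= bernoulli_subset q L X.
Proof.
move=> q'0 q'q q1 LM top; rewrite /bernoulli_subset.
case: ifP => [XL|_]; last by rewrite mulr0.
set N := size L; set a := #|`X|%fset.
have aN : (a <= N)%N by apply: uniq_leq_size (fset_uniq X) _; apply/allP.
have y0 : 0 < 1 - q' by lra.
have qNM : 1 - q' ^+ N <= 1 - q' ^+ M by rewrite lerD2l lerN2 ler_wiXn2l //; lra.
have topN : (1 - q' ^+ N) * (1 - q') ^+ (N - a) <= (1 - q) ^+ (N - a).
  apply: (@ler_mulXn_down _ _ _ M); [lra|lra|lra|exact: leq_trans (leq_subr a N) LM|].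
  by apply: le_trans top; rewrite ler_wpM2r ?exprn_ge0 //; lra.
rewrite mulrCA (le_trans (ler_wpM2l (exprn_ge0 _ q'0) topN)) //.
by rewrite ler_wpM2r ?exprn_ge0 ?lerXn2r ?nnegrE //; lra.
Qed.

End ParameterChoice.

Section KernelCoupling.
Variables (d : nat) (R : realDomainType).
Local Notation set := {fset word d}.
Variables (lA lB : set -> R) (Rel : set -> set -> Prop).
Variables (sA sB : seq set) (K : set -> set -> R).
Hypotheses (sA_uniq : uniq sA) (sB_uniq : uniq sB).
Hypotheses (lB_ge0 : forall B, 0 <= lB B) (lB_eq0 : forall B, B \notin sB -> lB B = 0)
  (sum_lB : \sum_(B <- sB) lB B = 1).
Hypotheses (K_ge0 : forall A B, 0 <= K A B) (K_eq0 : forall A B, A \notin sA -> K A B = 0)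
  (sum_K : forall B, B \in sB -> \sum_(A <- sA) K A B = 1).
Hypothesis marginal_A : forall A, \sum_(B <- sB) lB B * K A B = lA A.
Hypothesis K_Rel : forall A B, B \in sB -> 0 < K A B -> Rel A B.

Lemma kernel_coupling : coupling lA lB Rel.
Proof.
pose s := [seq (A, B) | A <- sA, B <- sB].
have mem_s A B : ((A, B) \in s) = (A \in sA) && (B \in sB).
  by apply/allpairsP/andP => [[[? ?] /= [? ? [-> ->]]]|[? ?]]; [|exists (A, B)].
have sum_lBK B : B \in sB -> \sum_(A <- sA) lB B * K A B = lB B.
  by move=> sBB; rewrite -mulr_sumr sum_K // mulr1.
exists (fun p => lB p.2 * K p.1 p.2), s; split.
  by apply: allpairs_uniq => // -[? ?] [? ?].
split; first by move=> [A B]; rewrite mulr_ge0.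
split.
  move=> [A B]; rewrite mem_s negb_and => /orP[/K_eq0 ->|/lB_eq0 ->] /=.
    by rewrite mulr0.
  by rewrite mul0r.
split.
  rewrite big_allpairs exchange_big /= -sum_lB; apply: eq_big_seq => B.
  exact: sum_lBK.
split.
  move=> S; rewrite big_mkcond big_allpairs /=.
  rewrite (eq_bigr (fun A => if A == S then \sum_(B <- sB) lB B * K A B else 0))
    => [|A _].
    rewrite -big_mkcond sum_pred1_seq //; case: ifP => // /negbT SA.
    by rewrite -marginal_A big1 // => B _; rewrite K_eq0 ?mulr0.
  by case: eqP => _ //; rewrite big1.
split.
  move=> S; rewrite big_mkcond big_allpairs exchange_big /=.
  rewrite (eq_big_seq (fun B => if B == S then lB B else 0)) => [|B sBB].
    by rewrite -big_mkcond sum_pred1_seq //; case: ifP => // /negbT /lB_eq0 ->.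
  by case: eqP => _; [rewrite sum_lBK | rewrite big1].
move=> [A B]; rewrite mem_s => /andP[_ sBB] /= pos; apply: K_Rel => //.
by rewrite lt_def K_ge0 andbT; apply: contraTneq pos => ->; rewrite mulr0 ltxx.
Qed.
End KernelCoupling.

Lemma preceq_prefix d (A B : word d -> Prop) (v : word d) :
  (forall w, A w -> B (v ++ w)) -> preceq A B.
Proof.
move=> AB; exists [::], v; split=> [w _|w Aw]; first by exists w.
by split; [exact: AB | exists w].
Qed.

Section TwoBranchCoupling.
Variables (R : realFieldType) (d : nat) (j0 j1 : 'I_d) (S S' : seq (word d)) (q q' : R).
Hypotheses (j01 : j0 != j1) (S_uniq : uniq S) (S'_uniq : uniq S').
Hypothesis cons_S : forall j w, w \in S -> (j :: w) \in S'.
Hypotheses (q'_gt0 : 0 < q') (q'_le1 : q' <= 1).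
Hypothesis dominated :
  forall A, (1 - q' ^+ size S) * bernoulli_subset q' S A <= bernoulli_subset q S A.
Local Notation set := {fset word d}.
Local Notation N := (size S).
Local Notation lB := (bernoulli_subset q' S').

Local Notation below j := [seq j :: w | w <- S].

Definition covers_branch0 (B : set) : bool := all (fun w => (j0 :: w) \in B) S.

Definition branch1 (B : set) : set := [fset w in S | (j1 :: w) \in B]%fset.

Lemma branch1_fsubsets B : branch1 B \in fsubsets S.
Proof. by rewrite mem_fsubsets; apply/allP => w; rewrite inE => /andP[]. Qed.

Lemma covers_branch0E B :
  covers_branch0 B = all (fun x => if x \in B then true else x \notin below j0) S'.
Proof.
apply/allP/allP => [covB x _|H w wS].
  by case: ifP => // xB; apply/mapP => -[w wS ex]; rewrite ex covB in xB.
by have := H _ (cons_S j0 wS); rewrite (map_f _ wS); case: ifP.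
Qed.

Lemma branch1E A B : A \in fsubsets S ->
  (A == branch1 B) = all (fun x => if x \in B then (x \in below j1) ==> (behead x \in A)
                                   else (x \in below j1) ==> (behead x \notin A)) S'.
Proof.
move=> AS; apply/eqP/allP => [-> x _|H].
  case: (boolP (x \in below j1)) => [/mapP[w wS ->]|_]; last by case: ifP.
  by rewrite !implyTb !inE /= wS; case: (_ \in B).
apply/fsetP => w; rewrite !inE; case wS: (w \in S) => /=; last first.
  by apply/negbTE/(fsubsets_notin AS); rewrite wS.
have := H _ (cons_S j1 wS); rewrite (map_f _ wS) !implyTb.
by case: (_ \in B) => // /negbTE.
Qed.

Lemma below_uniq j : uniq (below j).
Proof. by rewrite map_inj_uniq // => ? ? []. Qed.

Lemma below_sub j : {subset below j <= S'}.
Proof. by move=> _ /mapP[w wS ->]; apply: cons_S. Qed.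

Lemma below_disjoint x : x \in below j0 -> x \notin below j1.
Proof. by case/mapP=> w _ ->; apply/mapP => -[v _ [ej _]]; move/eqP: j01. Qed.

Lemma prod_covers_branch0 :
  \prod_(x <- S') (q' * true%:R + (1 - q') * (x \notin below j0)%:R) = q' ^+ N.
Proof.
rewrite (eq_bigr (fun x => if x \in below j0 then q' else 1)) => [|x _]; last first.
  by case: (x \in below j0); rewrite /= ?mulr0 ?mulr1 ?addr0 // addrC subrK.
rewrite prodr_if_mem ?below_uniq //; last exact: below_sub.
by rewrite (prodr_const_count _ predT) count_predT size_map.
Qed.

Lemma prod_branch1 A : A \in fsubsets S ->
  \prod_(x <- S') (q' * ((x \in below j1) ==> (behead x \in A))%:R
                   + (1 - q') * ((x \in below j1) ==> (behead x \notin A))%:R) =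
  bernoulli_subset q' S A.
Proof.
move=> AS; rewrite (eq_bigr (fun x => if x \in below j1 then
  (if behead x \in A then q' else 1 - q') else 1)) => [|x _]; last first.
  case: (x \in below j1); case: (_ \in A);
  by rewrite /= ?mulr0 ?mulr1 ?addr0 ?add0r // addrC subrK.
rewrite prodr_if_mem ?below_uniq //; last exact: below_sub.
by rewrite big_map bernoulli_subsetE // AS.
Qed.

Lemma prob_covers_branch0 :
  \sum_(B <- fsubsets S') lB B * (covers_branch0 B)%:R = q' ^+ N.
Proof.
under eq_bigr => B _ do rewrite covers_branch0E.
by rewrite sum_bernoulli_subset_all // prod_covers_branch0.
Qed.

Lemma prob_branch1 A : A \in fsubsets S ->
  \sum_(B <- fsubsets S') lB B * (A == branch1 B)%:R = bernoulli_subset q' S A.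
Proof.
move=> AS; under eq_bigr => B _ do rewrite branch1E //.
by rewrite sum_bernoulli_subset_all // prod_branch1.
Qed.

Lemma prob_covers_branch0_branch1 A : A \in fsubsets S ->
  \sum_(B <- fsubsets S') lB B * (covers_branch0 B && (A == branch1 B))%:R =
  q' ^+ N * bernoulli_subset q' S A.
Proof.
move=> AS; have event B : covers_branch0 B && (A == branch1 B) =
    all (fun x => if x \in B then (x \in below j1) ==> (behead x \in A)
                  else (x \notin below j0) && ((x \in below j1) ==> (behead x \notin A))) S'.
  rewrite covers_branch0E branch1E // -all_predI.
  by apply: eq_all => x /=; case: (x \in B).
under eq_bigr => B _ do rewrite event.
rewrite sum_bernoulli_subset_all // -prod_covers_branch0 -prod_branch1 // -big_split.
have total : q' * 1 + (1 - q') * 1 = 1 by rewrite !mulr1 addrC subrK.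
apply: eq_bigr => x _ /=.
case: (boolP (x \in below j0)) => [/below_disjoint /negbTE -> | _] /=.
  by rewrite total [RHS]mulr1.
by rewrite total mul1r.
Qed.

Definition branch_kernel (A B : set) : R :=
  if covers_branch0 B
  then (bernoulli_subset q S A - (1 - q' ^+ N) * bernoulli_subset q' S A) / q' ^+ N
  else (A == branch1 B)%:R.

Lemma branch_kernel_ge0 A B : 0 <= branch_kernel A B.
Proof.
rewrite /branch_kernel; case: ifP => _; last exact: ler0n.
by apply: divr_ge0; [rewrite subr_ge0 | rewrite exprn_ge0 // ltW].
Qed.

Lemma branch_kernel_eq0 A B : A \notin fsubsets S -> branch_kernel A B = 0.
Proof.
move=> AS; rewrite /branch_kernel !bernoulli_subset_eq0 // mulr0 subrr mul0r.
by case: ifP => // _; case: eqP => // eAB; rewrite eAB branch1_fsubsets in AS.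
Qed.

Lemma sum_branch_kernel B : \sum_(A <- fsubsets S) branch_kernel A B = 1.
Proof.
rewrite /branch_kernel; case: (covers_branch0 B).
  rewrite -mulr_suml sumrB -mulr_sumr !sum_bernoulli_subset // mulr1 opprB addrCA.
  by rewrite subrr addr0 divff // expf_neq0 // gt_eqF.
rewrite (eq_bigr (fun A => if A == branch1 B then 1 else 0)) => [|A _]; last first.
  by case: (A == _).
by rewrite -big_mkcond sum_pred1_seq ?fsubsets_uniq // branch1_fsubsets.
Qed.

Lemma marginal_branch_kernel A :
  \sum_(B <- fsubsets S') lB B * branch_kernel A B = bernoulli_subset q S A.
Proof.
case AS: (A \in fsubsets S); last first.
  rewrite bernoulli_subset_eq0 ?AS // big1 // => B _.
  by rewrite branch_kernel_eq0 ?AS ?mulr0.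
pose c := (bernoulli_subset q S A - (1 - q' ^+ N) * bernoulli_subset q' S A) / q' ^+ N.
rewrite (eq_bigr (fun B => c * (lB B * (covers_branch0 B)%:R) + lB B * (A == branch1 B)%:R
  - lB B * (covers_branch0 B && (A == branch1 B))%:R)) => [|B _]; last first.
  by rewrite /branch_kernel -/c; case: (covers_branch0 B); case: (A == _) => /=; ring.
rewrite sumrB big_split /= -mulr_sumr prob_covers_branch0 prob_branch1 //.
by rewrite prob_covers_branch0_branch1 // /c divfK ?expf_neq0 ?gt_eqF //; ring.
Qed.

Lemma branch_kernel_preceq A B :
  0 < branch_kernel A B -> preceq (fun w => w \in A) (fun w => w \in B).
Proof.
move=> pos; have AS : A \in fsubsets S.
  by apply: contraLR pos => /branch_kernel_eq0 ->; rewrite ltxx.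
move: pos; rewrite /branch_kernel; case: ifP => [/allP covB _|_].
  apply: (preceq_prefix (v := [:: j0])) => w wA; apply: covB.
  by move: AS; rewrite mem_fsubsets => /allP; apply.
case: eqP => [-> _|_]; last by rewrite ltxx.
by apply: (preceq_prefix (v := [:: j1])) => w; rewrite inE => /andP[].
Qed.

Lemma two_branch_coupling : coupling (bernoulli_subset q S) lB
  (fun A B => preceq (fun w => w \in A) (fun w => w \in B)).
Proof.
apply: (kernel_coupling (sA := fsubsets S) (sB := fsubsets S') (K := branch_kernel)).
- exact: fsubsets_uniq.
- exact: fsubsets_uniq.
- by move=> B; apply: bernoulli_subset_ge0; rewrite ltW.
- exact: bernoulli_subset_eq0.
- exact: sum_bernoulli_subset.
- exact: branch_kernel_ge0.
- exact: branch_kernel_eq0.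
- by move=> B _; apply: sum_branch_kernel.
- exact: marginal_branch_kernel.
by move=> A B _; apply: branch_kernel_preceq.
Qed.

End TwoBranchCoupling.

Section SupportSets.
Variable d : nat.
Implicit Types (w : word d) (m n : nat) (c : {fset nat}).

Lemma mem_layer n w : (w \in layer d n) = (size w == n).
Proof.
apply/mapP/eqP => [[t _ ->]|wn]; first exact: size_tuple.
by exists (Tuple (introT eqP wn)); rewrite ?mem_enum.
Qed.

Lemma size_layer n : size (layer d n) = (d ^ n)%N.
Proof. by rewrite size_map -cardE card_tuple card_ord. Qed.

Lemma mem_supp_set m c w :
  (w \in supp_set d m c) = (size w < m)%N && ((m - size w)%N \in c).
Proof.
apply/flattenP/andP => [[_ /mapP[n + ->]]|[wm wc]].
  by rewrite mem_filter mem_iota mem_layer => /andP[nc /andP[_ nm]] /eqP ->.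
exists (layer d (size w)); last by rewrite mem_layer.
by rewrite map_f // mem_filter mem_iota wc wm.
Qed.

Lemma flatten_layers_uniq (ns : seq nat) :
  uniq ns -> uniq (flatten [seq layer d n | n <- ns]).
Proof.
elim: ns => //= n ns IH /andP[nns /IH uns].
rewrite cat_uniq uns andbT map_inj_uniq ?enum_uniq //=; last exact: val_inj.
apply/hasPn => w /flattenP[_ /mapP[n' n'ns ->]]; rewrite !mem_layer => /eqP ->.
by apply: contra nns => /eqP <-.
Qed.

Lemma supp_set_uniq m c : uniq (supp_set d m c).
Proof. by apply: flatten_layers_uniq; rewrite filter_uniq ?iota_uniq. Qed.

Lemma size_supp_set m c : (size (supp_set d m c) <= \sum_(0 <= n < m) d ^ n)%N.
Proof.
rewrite size_flatten /shape sumnE !big_map big_filter big_mkcond /= /index_iota subn0.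
by apply: leq_sum => n _; case: ifP; rewrite ?size_layer.
Qed.

Lemma cons_supp_set m c c' (j : 'I_d) w : {subset c <= c'} ->
  w \in supp_set d m c -> (j :: w) \in supp_set d m.+1 c'.
Proof. by move=> cc'; rewrite !mem_supp_set /= ltnS subSS => /andP[-> /cc']. Qed.

End SupportSets.

Lemma lawAE d (R : realDomainType) (qh : R) m c :
  lawA qh m c = bernoulli_subset qh (supp_set d m c).
Proof. by []. Qed.

Local Open Scope fset_scope.

Theorem lemma6 (R : realType) (d : nat) (hd : (2 <= d)%N) (k : nat) (q : R)
    (hq0 : 0 < q) (hq1 : q < 1) :
  exists q' : R, 0 < q' /\ q' < q /\
    forall b' : {fset nat},
      (forall i, i \in b' -> (1 <= i <= k.+1)%N) ->
      let b := [fset i in b' | (i <= k)%N] in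
      coupling (lawA q k b) (lawA q' k.+1 b')
        (fun A B => preceq (fun w : word d => w \in A) (fun w => w \in B)).
Proof.
have q01 : 0 < q < 1 by rewrite hq0 hq1.
have [q' /andP[q'0 q'q] top] := exists_smaller_parameter (\sum_(0 <= n < k) d ^ n)%N q01.
exists q'; split=> //; split=> // b' _ b.
have bb' : {subset b <= b'} by move=> i; rewrite inE => /andP[].
rewrite !lawAE; apply: (@two_branch_coupling _ _ (Ordinal (ltnW hd)) (Ordinal hd)).
- by [].
- exact: supp_set_uniq.
- exact: supp_set_uniq.
- by move=> j w; apply: cons_supp_set.
- exact: q'0.
- exact: ltW (lt_trans q'q hq1).
move=> A; apply: bernoulli_subset_dominated top; rewrite ?ltW //.
exact: size_supp_set.
Qed.
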